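(* Let $k\ge1$, let $B\in\mathbb Z^{k\times k}$ with $\det B\ne0$, and let $\psi:B\mathbb Z^k\to\mathbb Z^k$, $z\mapsto Mz$, be a homomorphism given by a matrix $M\in\mathbb Q^{k\times k}$. Then \[R(\psi)=[\mathbb Z^k:B\mathbb Z^k]\cdot|\det(I_k-M)|_\infty .\]
   Context: $R(\psi)$ is the number of classes of the relation on $\mathbb Z^k$ given by $z_1\sim_\psi z_2\iff\exists z\in B\mathbb Z^k:\ z_1=z+z_2-\psi(z)$. $|a|_\infty=|a|$ if $a\neq0$ and $|0|_\infty=\infty$. *)

From mathcomp Require Import all_boot all_order all_algebra.
Set Implicit Arguments. Unset Strict Implicit. Unset Printing Implicit Defensive.
Import Order.TTheory GRing.Theory Num.Theory.
Local Open Scope ring_scope.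

Definition has_n_classes (T : Type) (r : T -> T -> Prop) (n : nat) : Prop :=
  exists f : 'I_n -> T,
    (forall i j, r (f i) (f j) -> i = j) /\ (forall t, exists i, r t (f i)).

Definition has_infinitely_many_classes (T : Type) (r : T -> T -> Prop) : Prop :=
  forall n : nat, exists f : 'I_n -> T, forall i j, r (f i) (f j) -> i = j.

Definition qmx (m n : nat) (A : 'M[int]_(m, n)) : 'M[rat]_(m, n) :=
  map_mx (fun z : int => z%:~R) A.

Definition inBZ (k : nat) (B : 'M[int]_k) (z : 'cV[int]_k) : Prop :=
  exists x : 'cV[int]_k, z = B *m x.

(* Coset relation of Z^k modulo B Z^k: its number of classes is the index
   [Z^k : B Z^k]. *)
Definition coset_rel (k : nat) (B : 'M[int]_k) (z1 z2 : 'cV[int]_k) : Prop :=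
  inBZ B (z1 - z2).

(* The Reidemeister relation of psi : B Z^k -> Z^k, z |-> M z:
   z1 ~ z2  iff  exists z in B Z^k, z1 = z + z2 - psi z
   (computed in Q^k, where psi z = M z). *)
Definition reid_rel (k : nat) (B : 'M[int]_k) (M : 'M[rat]_k)
  (z1 z2 : 'cV[int]_k) : Prop :=
  exists z : 'cV[int]_k, inBZ B z /\
    qmx z1 = qmx z + qmx z2 - M *m qmx z.

From mathcomp Require Import all_boot all_order all_algebra zify.
Import Order.TTheory GRing.Theory Num.Theory.
Local Open Scope ring_scope.

(* Since psi maps B Z^k into Z^k and is given by M, the matrix
   M B has integer entries: M B = N for some integer matrix N.  For z = B x,
   z1 = z + z2 - M z  reads  z1 - z2 = (B - N) x, so the Reidemeister relation
   of psi is exactly the coset relation of the sublattice C Z^k, C = B - N.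
   Moreover det C = det (I - M) * det B.  It therefore suffices to know that
   for any integer matrix C the index [Z^k : C Z^k] is |det C| when
   det C != 0 and infinite otherwise.  This is proved with the Smith normal
   form C = L D R (L, R unimodular, D diagonal): multiplication by L^-1
   carries the cosets of C Z^k onto those of D Z^k, and for a diagonal D the
   cosets are counted componentwise by residues modulo the diagonal entries. *)

Lemma classes_transfer (T U : Type) (r : T -> T -> Prop) (r' : U -> U -> Prop)
  (phi : T -> U) (psi : U -> T) :
  (forall u, phi (psi u) = u) ->
  (forall t1 t2, r t1 t2 <-> r' (phi t1) (phi t2)) ->
  (forall n, has_n_classes r' n -> has_n_classes r n) /\
  (has_infinitely_many_classes r' -> has_infinitely_many_classes r).
Proof.
move=> phiK r_r'; split.
  move=> n [f [f_sep f_cover]]; exists (fun i => psi (f i)); split.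
    by move=> i j /r_r'; rewrite !phiK; apply: f_sep.
  by move=> t; have [i rti] := f_cover (phi t); exists i; apply/r_r'; rewrite phiK.
move=> r'_inf n; have [f f_sep] := r'_inf n; exists (fun i => psi (f i)).
by move=> i j /r_r'; rewrite !phiK; apply: f_sep.
Qed.

(* A unimodular change of basis on the left, L^-1, maps the cosets of
   (L D R) Z^k onto the cosets of D Z^k (R only reparametrises the lattice). *)
Lemma coset_rel_unimodular k (D L R : 'M[int]_k) :
  L \in unitmx -> R \in unitmx -> forall z1 z2,
  coset_rel (L *m D *m R) z1 z2 <-> coset_rel D (invmx L *m z1) (invmx L *m z2).
Proof.
move=> uL uR z1 z2; split.
  case=> x Hx; exists (R *m x).
  by rewrite -mulmxBr Hx !mulmxA mulVmx // mul1mx.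
case=> y Hy; exists (invmx R *m y).
have -> : z1 - z2 = L *m (invmx L *m z1 - invmx L *m z2).
  by rewrite mulmxBr !mulmxA mulmxV // !mul1mx.
by rewrite Hy -!mulmxA [R *m _]mulmxA mulmxV // mul1mx.
Qed.

Section DiagonalLattice.

Variables (k : nat) (d : 'rV[int]_k).

Lemma diag_coset_dvd z1 z2 :
  coset_rel (diag_mx d) z1 z2 -> forall i, (d ord0 i %| z1 i ord0 - z2 i ord0)%Z.
Proof.
case=> x Hx i; apply/dvdzP; exists (x i ord0).
have := congr1 (fun A : 'cV_k => A i ord0) Hx.
by rewrite mul_diag_mx !mxE mulrC.
Qed.

(* A zero diagonal entry leaves one coordinate unconstrained: infinitely
   many cosets. *)
Lemma diag_zero_infinite (i : 'I_k) : d ord0 i = 0 ->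
  has_infinitely_many_classes (coset_rel (diag_mx d)).
Proof.
move=> d0 n; exists (fun j : 'I_n => \col_(l < k) (if l == i then (j : nat)%:Z else 0)).
move=> j1 j2 /diag_coset_dvd /(_ i); rewrite d0 dvd0z !mxE eqxx subr_eq0.
by move=> /eqP [] /val_inj.
Qed.

Lemma residue_eq (m : int) (a b : nat) :
  (a < `|m|)%N -> (b < `|m|)%N -> (m %| a%:Z - b%:Z)%Z -> a = b.
Proof.
move=> ha hb m_dvd; case: (eqVneq a b) => // neq; exfalso.
have pos : (0 < `|a%:Z - b%:Z|)%N by rewrite absz_gt0 subr_eq0 eqz_nat.
have := dvdn_leq pos m_dvd.
by move: ha hb; clear; lia.
Qed.

Definition residue_vec (g : {dffun forall i : 'I_k, 'I_(`|d ord0 i|)}) : 'cV[int]_k :=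
  \col_(l < k) ((g l : nat)%:Z).

(* When no diagonal entry vanishes, the residue vectors form a transversal
   of the cosets, so there are prod |d_i| cosets. *)
Lemma diag_count : (forall i, d ord0 i != 0) ->
  has_n_classes (coset_rel (diag_mx d)) (\prod_i `|d ord0 i|)%N.
Proof.
move=> d_nz.
pose T := {dffun forall i : 'I_k, 'I_(`|d ord0 i|)}.
have -> : (\prod_i `|d ord0 i|)%N = #|T|.
  rewrite card_dep_ffun foldrE big_map big_enum /=.
  by apply: eq_bigr => i _; rewrite card_ord.
exists (fun j => residue_vec (enum_val j)); split.
  move=> j1 j2 rel; apply: enum_val_inj; apply/ffunP => l; apply/val_inj.
  apply: residue_eq (ltn_ord _) (ltn_ord _) _.
  by have := diag_coset_dvd _ _ rel l; rewrite !mxE.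
move=> z.
have mod_lt (l : 'I_k) : (`|(z l ord0 %% d ord0 l)%Z|%N < `|d ord0 l|)%N.
  by rewrite -ltz_nat gez0_abs ?modz_ge0 ?d_nz // abszE ltz_mod ?d_nz.
exists (enum_rank ([ffun l => Ordinal (mod_lt l)] : T)); rewrite enum_rankK.
exists (\col_l ((z l ord0 %/ d ord0 l)%Z)).
apply/matrixP => l c; rewrite (ord1 c) mul_diag_mx !mxE ffunE /=.
by rewrite gez0_abs ?modz_ge0 ?d_nz // {1}(divz_eq (z l ord0) (d ord0 l)) addrK mulrC.
Qed.

End DiagonalLattice.

Lemma unit_absz {x : int} : x \is a GRing.unit -> `|x|%N = 1%N.
Proof. by rewrite qualifE /= => /orP[]/eqP->. Qed.

Lemma lattice_index k (C : 'M[int]_k) :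
  (\det C != 0 -> has_n_classes (coset_rel C) `|\det C|%N) /\
  (\det C = 0 -> has_infinitely_many_classes (coset_rel C)).
Proof.
have [L uL [R uR [s _ HC]]] := int_Smith_normal_form C.
pose d : 'rV[int]_k := \row_i s`_i.
have {}HC : C = L *m diag_mx d *m R.
  by rewrite HC; congr (_ *m _ *m _); apply/matrixP => i j; rewrite !mxE.
have [to_diag to_diag_inf] := @classes_transfer _ _ _ _ _ _ (mulKmx uL)
  (@coset_rel_unimodular _ (diag_mx d) _ _ uL uR).
rewrite -HC in to_diag to_diag_inf.
have detC : \det C = \det L * (\prod_i d ord0 i) * \det R.
  by rewrite HC !det_mulmx det_diag.
have [detL_unit detR_unit] : \det L \is a GRing.unit /\ \det R \is a GRing.unit.
  by rewrite -!unitmxE.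
split=> [detC_nz | detC0].
  have d_nz i : d ord0 i != 0.
    by apply: contra detC_nz => /eqP d0; rewrite detC (bigD1 i) //= d0 !(mul0r, mulr0).
  have -> : `|\det C|%N = (\prod_i `|d ord0 i|)%N.
    rewrite detC !abszM (unit_absz detL_unit) (unit_absz detR_unit) mul1n muln1.
    exact: (@big_morph _ _ (fun x : int => `|x|%N) 1%N muln 1 _ abszM (erefl 1%N)).
  exact/to_diag/diag_count.
have : \prod_i d ord0 i = 0.
  apply/eqP; move: detC0; rewrite detC => /eqP; rewrite !mulf_eq0.
  case/orP=> [/orP[]|] /eqP det0 //.
    by move: detL_unit; rewrite det0 unitr0.
  by move: detR_unit; rewrite det0 unitr0.
move/eqP; rewrite prodf_seq_eq0 => /hasP [i _ /= /eqP di0].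
exact/to_diag_inf/(@diag_zero_infinite _ _ _ di0).
Qed.

Lemma qmxM m n p (A : 'M[int]_(m, n)) (B : 'M[int]_(n, p)) :
  qmx (A *m B) = qmx A *m qmx B.
Proof. exact: map_mxM. Qed.

Lemma qmxD m n (A B : 'M[int]_(m, n)) : qmx (A + B) = qmx A + qmx B.
Proof. exact: map_mxD. Qed.

Lemma qmxB m n (A B : 'M[int]_(m, n)) : qmx (A - B) = qmx A - qmx B.
Proof. exact: map_mxB. Qed.

Lemma qmx_inj m n : injective (@qmx m n).
Proof.
move=> A B eqAB; apply/matrixP => i j.
by have := congr1 (fun X : 'M[rat]_(m, n) => X i j) eqAB; rewrite !mxE => /intr_inj.
Qed.

Lemma qmx_det n (A : 'M[int]_n) : \det (qmx A) = (\det A)%:~R.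
Proof. exact: det_map_mx. Qed.

(* A rational matrix mapping Z^n into Z^m has integer entries: its columns
   are the images of the standard basis vectors. *)
Lemma integral_of_lattice_map m n (A : 'M[rat]_(m, n)) :
  (forall x : 'cV[int]_n, exists y : 'cV[int]_m, qmx y = A *m qmx x) ->
  exists N : 'M[int]_(m, n), qmx N = A.
Proof.
move=> A_int.
have qmx_delta (j : 'I_n) : qmx (delta_mx j (0 : 'I_1)) = delta_mx j 0.
  by apply/matrixP => a b; rewrite !mxE; case: (_ && _).
have col_int (j : 'I_n) : exists y : 'cV[int]_m, qmx y == col j A.
  by have [y] := A_int (delta_mx j 0); rewrite qmx_delta -colE => eq_y; exists y; rewrite eq_y.
exists (\matrix_(i, j) xchoose (col_int j) i 0); apply/matrixP => i j.
have /eqP/(congr1 (fun X : 'cV[rat]_m => X i 0)) := xchooseP (col_int j).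
by rewrite !mxE.
Qed.

Section ReidemeisterRelation.

Variables (k : nat) (B N : 'M[int]_k) (M : 'M[rat]_k).

Hypothesis MB_integral : qmx N = M *m qmx B.

Lemma psi_lattice (x : 'cV[int]_k) : M *m qmx (B *m x) = qmx (N *m x).
Proof. by rewrite !qmxM mulmxA MB_integral. Qed.

Lemma reid_rel_coset z1 z2 : reid_rel B M z1 z2 <-> coset_rel (B - N) z1 z2.
Proof.
split.
  case=> z [[x ->]]; rewrite psi_lattice -qmxD -qmxB => /qmx_inj ->.
  by exists x; rewrite mulmxBl addrAC addrK.
case=> x z12; exists (B *m x); split; first by exists x.
rewrite psi_lattice -qmxD -qmxB; congr qmx.
by rewrite addrAC -mulmxBl -z12 addrNK.
Qed.

Lemma det_reid_lattice :
  (\det (B - N))%:~R = \det (1%:M - M) * (\det B)%:~R :> rat.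
Proof. by rewrite -!qmx_det -det_mulmx mulmxBl mul1mx -MB_integral -qmxB. Qed.

End ReidemeisterRelation.

(* R(psi) = [Z^k : B Z^k] |det (I - M)|, infinite when det (I - M) = 0. *)
Theorem mainTheorem6 (k : nat) (B : 'M[int]_k) (M : 'M[rat]_k)
  (hk : (0 < k)%N)
  (hB : \det B != 0)
  (hpsi : forall x : 'cV[int]_k, exists y : 'cV[int]_k,
            qmx y = M *m qmx (B *m x)) :
  exists idx : nat,
    has_n_classes (coset_rel B) idx /\
    (\det (1%:M - M) = 0 -> has_infinitely_many_classes (reid_rel B M)) /\
    (\det (1%:M - M) != 0 ->
       exists n : nat,
         (n%:R : rat) = idx%:R * `|\det (1%:M - M)| /\
         has_n_classes (reid_rel B M) n).
Proof.
have [N MB_integral] : exists N : 'M[int]_k, qmx N = M *m qmx B.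
  by apply: integral_of_lattice_map => x; rewrite -mulmxA -qmxM; apply: hpsi.
have [reid_n reid_inf] := @classes_transfer _ _ _ _ id id (fun _ => erefl)
  (@reid_rel_coset _ _ _ _ MB_integral).
have detC := @det_reid_lattice _ _ _ _ MB_integral.
have [C_index C_inf] := lattice_index _ (B - N).
exists `|\det B|%N; split; first exact: (lattice_index _ B).1 hB.
split=> [det0 | det_nz].
  by apply/reid_inf/C_inf/eqP; rewrite -(intr_eq0 rat) detC det0 mul0r.
exists `|\det (B - N)|%N; split.
  by rewrite !natr_absz !intr_norm detC normrM mulrC.
by apply/reid_n/C_index; rewrite -(intr_eq0 rat) detC mulf_neq0 ?intr_eq0.
Qed.
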